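(* Let $\mu$ be an infinite cardinal. Then there is a strong $\mu^+$-system $S = \langle I \times \kappa, \mathcal{R}\rangle$ such that $|\mathcal{R}| = \mu$ and $S$ has no cofinal branch.
   Context: Let $\lambda$ be an infinite regular cardinal. A binary relation $R$ on a set $X$ is tree-like if whenever $a <_R c$ and $b <_R c$, then $a,b$ are $R$-comparable (i.e. $a=b$, $a<_R b$ or $b<_R a$). A $\lambda$-system is $S=\langle\{\{\alpha\}\times\kappa_\alpha\mid\alpha\in I\},\mathcal{R}\rangle$ where: $I\subseteq\lambda$ is unbounded and $0<\kappa_\alpha<\lambda$ for $\alpha\in I$ (the $\alpha$-th level is $S_\alpha=\{\alpha\}\times\kappa_\alpha$, and $S$ also denotes the union of the levels); $\mathcal{R}$ is a set of binary, transitive, tree-like relations on $S$ with $|\mathcal{R}|<\lambda$; for all $R\in\mathcal{R}$, if $(\alpha_0,\beta_0)<_R(\alpha_1,\beta_1)$ then $\alpha_0<\alpha_1$; and for all $\alpha_0<\alpha_1$ in $I$ there are $\beta_0<\kappa_{\alpha_0}$, $\beta_1<\kappa_{\alpha_1}$, $R\in\mathcal{R}$ with $(\alpha_0,\beta_0)<_R(\alpha_1,\beta_1)$. It is a strong $\lambda$-system if moreover for all $\alpha_0<\alpha_1$ in $I$ and every $\beta_1<\kappa_{\alpha_1}$ there are $\beta_0<\kappa_{\alpha_0}$ and $R\in\mathcal{R}$ with $(\alpha_0,\beta_0)<_R(\alpha_1,\beta_1)$. $\langle I\times\kappa,\mathcal{R}\rangle$ denotes a system with $\kappa_\alpha=\kappa$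 for all $\alpha\in I$. A branch of $S$ through $R\in\mathcal{R}$ is a set $b\subseteq S$ any two elements of which are $R$-comparable; it is cofinal if $b\cap S_\alpha\neq\emptyset$ for unboundedly many $\alpha\in I$. $S$ has a cofinal branch if it has a cofinal branch through some $R\in\mathcal{R}$. *)

From Stdlib Require Import Relations.

Definition inj_into (A B : Type) : Prop := exists f : A -> B, forall x y, f x = f y -> x = y.

Definition infinite_type (M : Type) : Prop := inj_into nat M.

Definition strict_well_order {L : Type} (lt : L -> L -> Prop) : Prop :=
  (forall x, ~ lt x x) /\
  (forall x y z, lt x y -> lt y z -> lt x z) /\
  (forall x y, x = y \/ lt x y \/ lt y x) /\
  well_founded lt.

Definition le_of {L : Type} (lt : L -> L -> Prop) (x y : L) : Prop := x = y \/ lt x y.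

Definition seg {L : Type} (lt : L -> L -> Prop) (a : L) : Type := {b : L | lt b a}.

(* (L, lt) is (order-isomorphic to) the ordinal mu^+, where mu = |M|:
   a well-order of cardinality > mu all of whose proper initial segments
   have cardinality <= mu. *)
Definition is_successor_of {L : Type} (lt : L -> L -> Prop) (M : Type) : Prop :=
  strict_well_order lt /\ ~ inj_into L M /\ (forall a : L, inj_into (seg lt a) M).

Definition is_cardinal_in {L : Type} (lt : L -> L -> Prop) (k : L) : Prop :=
  forall j, lt j k -> ~ inj_into (seg lt k) (seg lt j).

(* Nodes are pairs (alpha, beta) : L * L; S = I x kappa. *)
Definition in_system {L : Type} (lt : L -> L -> Prop) (I : L -> Prop) (k : L) (x : L * L) : Prop :=
  I (fst x) /\ lt (snd x) k.

(* A strong lambda-system <I x kappa, R> (lambda = (L,lt)), with the relations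
   indexed by an index type Idx (R : Idx -> relation on S). *)
Definition strong_system {L Idx : Type} (lt : L -> L -> Prop)
    (I : L -> Prop) (k : L) (R : Idx -> L * L -> L * L -> Prop) : Prop :=
  (forall a, exists b, I b /\ le_of lt a b) /\
  (exists b, lt b k) /\ is_cardinal_in lt k /\
  (forall r x y, R r x y -> in_system lt I k x /\ in_system lt I k y) /\
  (forall r x y z, R r x y -> R r y z -> R r x z) /\
  (forall r a b c, R r a c -> R r b c -> a = b \/ R r a b \/ R r b a) /\
  (forall r x y, R r x y -> lt (fst x) (fst y)) /\
  (forall a0 a1, I a0 -> I a1 -> lt a0 a1 ->
     exists b0 b1 r, lt b0 k /\ lt b1 k /\ R r (a0, b0) (a1, b1)) /\
  (forall a0 a1 b1, I a0 -> I a1 -> lt a0 a1 -> lt b1 k ->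
     exists b0 r, lt b0 k /\ R r (a0, b0) (a1, b1)).

Definition has_cofinal_branch {L Idx : Type} (lt : L -> L -> Prop)
    (I : L -> Prop) (k : L) (R : Idx -> L * L -> L * L -> Prop) : Prop :=
  exists (r : Idx) (b : L * L -> Prop),
    (forall x, b x -> in_system lt I k x) /\
    (forall x y, b x -> b y -> x = y \/ R r x y \/ R r y x) /\
    (forall a, exists al be, le_of lt a al /\ b (al, be)).

(* Take one node on every level alpha < mu^+, fix injections e_beta : beta -> mu,
   and let R_m link alpha to beta when e_beta(alpha) = m, closed under
   transitivity.  Any two levels alpha < beta are linked by R_(e_beta(alpha)),
   so the system is strong.  Since e_beta is injective, every node has at most
   one immediate R_m-predecessor; hence R_m is a forest and every node of a
   branch has finite depth above a fixed root alpha_0 of the branch.  For a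
   cofinal branch, sending alpha to (depth of a branch node beta above alpha,
   e_beta(alpha)) would inject mu^+ into omega x mu, which has size mu. *)

From Stdlib Require Import Arith ClassicalEpsilon FunctionalExtensionality PropExtensionality Classical Lia Cantor.

Section WellOrder.
Variables (L : Type) (lt : L -> L -> Prop).
Hypothesis Hwo : strict_well_order lt.

Lemma wo_irrefl x : ~ lt x x.
Proof. apply (proj1 Hwo). Qed.

Lemma wo_trans x y z : lt x y -> lt y z -> lt x z.
Proof. apply (proj1 (proj2 Hwo)). Qed.

Lemma wo_total x y : x = y \/ lt x y \/ lt y x.
Proof. apply (proj1 (proj2 (proj2 Hwo))). Qed.

Lemma wo_wf : well_founded lt.
Proof. apply (proj2 (proj2 (proj2 Hwo))). Qed.

Lemma wo_asym x y : lt x y -> ~ lt y x.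
Proof. intros H1 H2. apply (wo_irrefl x). eapply wo_trans; eauto. Qed.

Lemma wo_min (P : L -> Prop) :
  (exists x, P x) -> exists x, P x /\ forall y, P y -> ~ lt y x.
Proof.
  intros [x Px]. revert Px. induction x as [x IH] using (well_founded_ind wo_wf). intro Px.
  destruct (classic (exists y, P y /\ lt y x)) as [[y [Py Hy]]|N].
  - apply (IH y Hy Py).
  - exists x; split; auto. intros y Py Hy; apply N; eauto.
Qed.

Lemma wo_bottom_lt z x : (forall y, ~ lt y z) -> x <> z -> lt z x.
Proof.
  intros Hz Hx. destruct (wo_total z x) as [E|[H|H]]; auto; exfalso.
  - exact (Hx (eq_sym E)).
  - exact (Hz x H).
Qed.

Lemma wo_bottom_succ z :
  (forall y, ~ lt y z) -> (exists y, lt z y) -> exists k, forall b, lt b k <-> b = z.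
Proof.
  intros Hz Hup. destruct (wo_min (lt z) Hup) as [k [Hzk Hk]].
  exists k. intro b. split; [|intros ->; exact Hzk].
  intro Hb. destruct (classic (b = z)) as [|N]; auto.
  exfalso. exact (Hk b (wo_bottom_lt z b Hz N) Hb).
Qed.

Lemma cofinal_above (B : L -> Prop) :
  (forall x, exists y, lt x y) -> (forall a, exists y, B y /\ le_of lt a y) ->
  forall a a', exists y, B y /\ lt a y /\ lt a' y.
Proof.
  intros Hnomax HB a a'.
  assert (Hm : exists m, le_of lt a m /\ le_of lt a' m).
  { destruct (wo_total a a') as [<-|[H|H]].
    - exists a; split; left; auto.
    - exists a'; split; [right|left]; auto.
    - exists a; split; [left|right]; auto. }
  destruct Hm as [m [Ham Ha'm]]. destruct (Hnomax m) as [c Hmc].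
  destruct (HB c) as [y [By Hcy]].
  assert (Hmy : lt m y) by (destruct Hcy as [<-|Hcy]; [|eapply wo_trans]; eauto).
  exists y. split; auto.
  split; [destruct Ham as [<-|Ham]|destruct Ha'm as [<-|Ha'm]]; eauto using wo_trans.
Qed.

Definition image_below {A : Type} (h : L -> A) (b : L) (y : A) : Prop :=
  exists c, lt c b /\ h c = y.

Lemma greedy_recursion (A : Type) (a0 : A) (F : (A -> Prop) -> A -> Prop) :
  exists h : L -> A, forall b,
    (exists x, F (image_below h b) x) -> F (image_below h b) (h b).
Proof.
  set (step := fun (b : L) (rec : forall c, lt c b -> A) =>
    epsilon (inhabits a0) (F (fun y => exists c (H : lt c b), rec c H = y))).
  set (h := Fix wo_wf (fun _ => A) step).
  exists h. intro b.
  replace (h b) with (epsilon (inhabits a0) (F (image_below h b))).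
  { apply epsilon_spec. }
  unfold h. rewrite Fix_eq.
  - unfold step. f_equal. f_equal. apply functional_extensionality; intro y.
    apply propositional_extensionality.
    split; intros [c [H E]]; exists c; eauto.
  - intros x f g Hfg. assert (f = g) as ->; auto.
    apply functional_extensionality_dep; intro y.
    apply functional_extensionality_dep; auto.
Qed.

(* The witnesses [w] of a greedy construction are pairwise distinct, so a
   construction running through all of [L] would inject [L] into [W]. *)
Lemma greedy_recursion_halts (A W : Type) (a0 : A) (F : (A -> Prop) -> A -> Prop)
    (w : A -> W) :
  (forall S x y, F S x -> S y -> w x <> w y) -> ~ inj_into L W ->
  exists (h : L -> A) (b : L),
    (forall a, lt a b -> F (image_below h a) (h a)) /\
    ~ exists x, F (image_below h b) x.
Proof.
  intros Hfresh HnL.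
  destruct (greedy_recursion A a0 F) as [h Hh].
  destruct (classic (exists b, ~ exists x, F (image_below h b) x)) as [Hstuck|Hall].
  - destruct (wo_min _ Hstuck) as [b [Hb Hmin]].
    exists h, b. split; [|exact Hb].
    intros a Ha. apply Hh. apply NNPP. intro N. exact (Hmin a N Ha).
  - exfalso. apply HnL.
    assert (HF : forall b, F (image_below h b) (h b)).
    { intro b. apply Hh. apply NNPP. intro N. apply Hall. eauto. }
    exists (fun a => w (h a)). intros x y E.
    destruct (wo_total x y) as [|[H|H]]; auto; exfalso.
    + apply (Hfresh _ _ _ (HF y) (ex_intro _ x (conj H eq_refl))). auto.
    + apply (Hfresh _ _ _ (HF x) (ex_intro _ y (conj H eq_refl))). auto.
Qed.

Lemma inj_into_of_not_inj_into (A : Type) : ~ inj_into L A -> inj_into A L.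
Proof.
  intro HnL.
  destruct (classic (inhabited A)) as [[a0]|HA].
  2:{ exists (fun a => False_rect L (HA (inhabits a))). intro a. exfalso. exact (HA (inhabits a)). }
  destruct (greedy_recursion_halts A A a0 (fun S x => ~ S x) (fun x => x))
    as [h [b [_ Hb]]]; auto.
  { intros S x y Hx Hy E. subst. auto. }
  assert (Hsurj : forall x, exists c, h c = x).
  { intro x. destruct (classic (image_below h b x)) as [[c [_ E]]|N]; eauto.
    exfalso. apply Hb. eauto. }
  destruct (choice _ Hsurj) as [g Hg].
  exists g. intros x y E. rewrite <- (Hg x), <- (Hg y), E. reflexivity.
Qed.

End WellOrder.

Lemma inj_into_trans (A B C : Type) : inj_into A B -> inj_into B C -> inj_into A C.
Proof. intros [f Hf] [g Hg]. exists (fun x => g (f x)). auto. Qed.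

Lemma inj_into_option (A B : Type) : inj_into A B -> inj_into (option A) (option B).
Proof.
  intros [f Hf]. exists (option_map f).
  intros [x|] [y|]; simpl; intro E; try discriminate; auto.
  injection E as E. f_equal. auto.
Qed.

Lemma inj_into_option_nat_prod (A : Type) (a0 : A) : inj_into (option A) (nat * A).
Proof.
  exists (fun x => match x with Some a => (0, a) | None => (1, a0) end).
  intros [x|] [y|]; intro E; try discriminate; auto. congruence.
Qed.

Lemma inj_into_avoiding (A B : Type) (z : B) :
  inj_into (option A) B -> exists t : A -> B, (forall x y, t x = t y -> x = y) /\ forall x, t x <> z.
Proof.
  intros [g Hg].
  exists (fun a => if excluded_middle_informative (g (Some a) = z) then g None else g (Some a)).
  split.
  - intros x y.
    destruct (excluded_middle_informative (g (Some x) = z)) as [Hx|Hx];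
    destruct (excluded_middle_informative (g (Some y) = z)) as [Hy|Hy]; intro E.
    + assert (Some x = Some y) by (apply Hg; congruence). congruence.
    + apply Hg in E. discriminate.
    + apply Hg in E. discriminate.
    + apply Hg in E. congruence.
  - intro x. destruct (excluded_middle_informative (g (Some x) = z)) as [Hx|Hx]; auto.
    intro E. rewrite <- Hx in E. apply Hg in E. discriminate.
Qed.

Lemma inj_into_sig_extend (A B : Type) (P : A -> Prop) (b0 : B) :
  inj_into {x | P x} B -> exists e : A -> B, forall x y, P x -> P y -> e x = e y -> x = y.
Proof.
  intros [f Hf].
  exists (fun x => match excluded_middle_informative (P x) with
                   | left H => f (exist _ x H) | right _ => b0 end).
  intros x y Hx Hy.
  destruct (excluded_middle_informative (P x)) as [H1|]; [|contradiction].
  destruct (excluded_middle_informative (P y)) as [H2|]; [|contradiction].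
  intro E. apply Hf in E. injection E. auto.
Qed.

Lemma nat_strict_well_order : strict_well_order Peano.lt.
Proof.
  split; [intros; lia|]. split; [intros; lia|]. split; [intros; lia|]. exact Wf_nat.lt_wf.
Qed.

Lemma to_nat_inj p q : to_nat p = to_nat q -> p = q.
Proof. intro E. rewrite <- (cancel_of_to p), <- (cancel_of_to q), E. reflexivity. Qed.

(* If [M] is covered, up to a finite remainder, by disjoint injective sequences
   [h x], then [(n, h x i)] can be coded as [h x (2 * <n, i>)] and the
   remainder as [h x0 (2 * <n, c> + 1)] for one fixed sequence [h x0]. *)
Lemma inj_into_nat_prod_of_cover (X M : Type) (P : X -> Prop) (h : X -> nat -> M) :
  inj_into nat M ->
  (forall x i j, P x -> h x i = h x j -> i = j) ->
  (forall x x' i j, P x -> P x' -> h x i = h x' j -> x = x') ->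
  ~ inj_into nat {m | forall x i, P x -> h x i <> m} ->
  inj_into (nat * M) M.
Proof.
  intros [f Hf] Hinj Hdisj Hrest.
  set (C := fun m => forall x i, P x -> h x i <> m).
  assert (Hx0 : exists x0, P x0).
  { apply NNPP. intro N. apply Hrest.
    exists (fun n => exist C (f n) (fun x i Px _ => N (ex_intro _ x Px))).
    intros n n' E. apply Hf. injection E. auto. }
  destruct Hx0 as [x0 Px0].
  destruct (inj_into_of_not_inj_into nat Peano.lt nat_strict_well_order {m | C m} Hrest)
    as [c0 Hc0].
  destruct (inj_into_sig_extend M nat C 0 (ex_intro _ c0 Hc0)) as [c Hc].
  assert (Hloc : forall m, exists p : X * nat, ~ C m -> P (fst p) /\ h (fst p) (snd p) = m).
  { intro m. destruct (classic (C m)) as [Cm|Cm].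
    - exists (x0, 0). tauto.
    - apply not_all_ex_not in Cm as [x Cm]. apply not_all_ex_not in Cm as [i Cm].
      exists (x, i). intros _. simpl. tauto. }
  destruct (choice _ Hloc) as [loc Hloc'].
  exists (fun '(n, m) =>
    if excluded_middle_informative (C m) then h x0 (2 * to_nat (n, c m) + 1)
    else h (fst (loc m)) (2 * to_nat (n, snd (loc m)))).
  intros [n m] [n' m'].
  destruct (excluded_middle_informative (C m)) as [Cm|Cm];
  destruct (excluded_middle_informative (C m')) as [Cm'|Cm']; intro E.
  - apply Hinj in E; auto.
    assert (E2 : to_nat (n, c m) = to_nat (n', c m')) by lia.
    apply to_nat_inj in E2. injection E2 as -> E3. f_equal. auto.
  - destruct (Hloc' m' Cm') as [H1 _].
    pose proof (Hdisj _ _ _ _ Px0 H1 E) as Ex. rewrite <- Ex in E.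
    apply Hinj in E; auto. lia.
  - destruct (Hloc' m Cm) as [H1 _].
    pose proof (Hdisj _ _ _ _ H1 Px0 E) as Ex. rewrite Ex in E.
    apply Hinj in E; auto. lia.
  - destruct (Hloc' m Cm) as [H1 H2]. destruct (Hloc' m' Cm') as [H1' H2'].
    pose proof (Hdisj _ _ _ _ H1 H1' E) as Ex. rewrite <- Ex in E.
    apply Hinj in E; auto.
    assert (E2 : to_nat (n, snd (loc m)) = to_nat (n', snd (loc m'))) by lia.
    apply to_nat_inj in E2. injection E2 as -> E3.
    rewrite <- H2, <- H2', Ex, E3. reflexivity.
Qed.

(* A maximal family of disjoint injective sequences in [M], built greedily
   along [L], leaves a finite remainder. *)
Lemma inj_into_nat_prod_self (L M : Type) (lt : L -> L -> Prop) :
  strict_well_order lt -> ~ inj_into L M -> infinite_type M -> inj_into (nat * M) M.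
Proof.
  intros Hwo HnL [f Hf].
  set (F := fun (S : (nat -> M) -> Prop) (g : nat -> M) =>
    (forall i j, g i = g j -> i = j) /\ (forall g' i j, S g' -> g i <> g' j)).
  destruct (greedy_recursion_halts L lt Hwo (nat -> M) M f F (fun g => g 0))
    as [h [b [Hb Hnb]]]; auto.
  { intros S x y [_ Hx] Hy. apply Hx. exact Hy. }
  apply (inj_into_nat_prod_of_cover L M (fun a => lt a b) h (ex_intro _ f Hf)).
  - intros a i j Ha. apply (proj1 (Hb a Ha)).
  - intros a a' i j Ha Ha' E.
    destruct (wo_total L lt Hwo a a') as [|[H|H]]; auto; exfalso.
    + apply (proj2 (Hb a' Ha') (h a) j i); eauto. exists a. auto.
    + apply (proj2 (Hb a Ha) (h a') i j); eauto. exists a'. auto.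
  - intros [u Hu]. apply Hnb. exists (fun n => proj1_sig (u n)). split.
    + intros i j E. apply Hu. destruct (u i), (u j). simpl in E. subst.
      f_equal. apply proof_irrelevance.
    + intros g' i j [c [Hc <-]] E. destruct (u i) as [m Hm]. simpl in E.
      exact (Hm c j Hc (eq_sym E)).
Qed.

Lemma wo_no_max (L M : Type) (lt : L -> L -> Prop) :
  strict_well_order lt -> ~ inj_into L M -> (forall a, inj_into (seg lt a) M) ->
  inj_into (option M) M -> forall x, exists y, lt x y.
Proof.
  intros Hwo HnL Hseg HoM x. apply NNPP. intro Hmax. apply HnL.
  apply (inj_into_trans _ (option (seg lt x))).
  2:{ eapply inj_into_trans; [apply inj_into_option, Hseg|exact HoM]. }
  exists (fun y => match excluded_middle_informative (lt y x) with
                   | left H => Some (exist _ y H) | right _ => None end).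
  intros y y'.
  destruct (excluded_middle_informative (lt y x)) as [H|H];
  destruct (excluded_middle_informative (lt y' x)) as [H'|H']; intro E;
  try discriminate.
  - injection E. auto.
  - assert (Hx : forall w, ~ lt w x -> w = x).
    { intros w Hw. destruct (wo_total L lt Hwo w x) as [|[|Hxw]]; auto; exfalso; eauto. }
    rewrite (Hx y H), (Hx y' H'). reflexivity.
Qed.

Fixpoint steps {L : Type} (D : L -> L -> Prop) (n : nat) (x y : L) : Prop :=
  match n with
  | 0 => x = y
  | S n => exists w, steps D n x w /\ D w y
  end.

Definition reach {L : Type} (D : L -> L -> Prop) (x y : L) : Prop :=
  exists n, steps D (S n) x y.

Section Forest.
Variables (L : Type) (lt : L -> L -> Prop).
Hypothesis Hwo : strict_well_order lt.
Variable D : L -> L -> Prop.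
Hypothesis D_lt : forall w y, D w y -> lt w y.
Hypothesis D_pred_unique : forall w w' y, D w y -> D w' y -> w = w'.

Lemma steps_le n x y : steps D n x y -> le_of lt x y.
Proof.
  revert y; induction n as [|n IH]; simpl; intros y H; [left; auto|].
  destruct H as [w [H1 H2]]. right. destruct (IH w H1) as [->|H]; auto.
  eapply wo_trans; eauto.
Qed.

Lemma reach_lt x y : reach D x y -> lt x y.
Proof.
  intros [n [w [H1 H2]]]. destruct (steps_le n x w H1) as [->|H]; auto.
  eapply wo_trans; eauto.
Qed.

Lemma steps_add m n x y u : steps D n x y -> steps D m y u -> steps D (m + n) x u.
Proof.
  revert u; induction m as [|m IH]; simpl; intros u H1 H2.
  - subst; auto.
  - destruct H2 as [w [H2 H3]]. exists w; split; eauto.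
Qed.

Lemma steps_length_unique n m x y : steps D n x y -> steps D m x y -> n = m.
Proof.
  revert m y; induction n as [|n IH]; intros [|m] y H1 H2; auto.
  - simpl in H1; subst. exfalso. exact (wo_irrefl L lt Hwo _ (reach_lt _ _ (ex_intro _ m H2))).
  - simpl in H2; subst. exfalso. exact (wo_irrefl L lt Hwo _ (reach_lt _ _ (ex_intro _ n H1))).
  - destruct H1 as [w [H1 H1']]. destruct H2 as [w' [H2 H2']].
    assert (w = w') as <- by eauto. f_equal. exact (IH m w H1 H2).
Qed.

Lemma steps_back n m a b c :
  steps D n a c -> steps D m b c -> n <= m -> steps D (m - n) b a.
Proof.
  revert m c; induction n as [|n IH]; intros m c H1 H2 Hle.
  - simpl in H1; subst. rewrite Nat.sub_0_r. auto.
  - destruct m as [|m]; [lia|].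
    destruct H1 as [w [H1 H1']]. destruct H2 as [w' [H2 H2']].
    assert (w = w') as <- by eauto. apply (IH m w); auto. lia.
Qed.

Lemma reach_trans x y u : reach D x y -> reach D y u -> reach D x u.
Proof.
  intros [n H1] [m H2]. exists (m + S n). apply (steps_add (S m) (S n) x y u); auto.
Qed.

Lemma reach_tree a b c :
  reach D a c -> reach D b c -> a = b \/ reach D a b \/ reach D b a.
Proof.
  intros [n H1] [m H2].
  destruct (Nat.le_gt_cases (S n) (S m)) as [Hl|Hl].
  - pose proof (steps_back _ _ _ _ _ H1 H2 Hl) as H.
    destruct (S m - S n) as [|p]; [simpl in H; auto|].
    right; right. exists p. auto.
  - pose proof (steps_back _ _ _ _ _ H2 H1 (Nat.lt_le_incl _ _ Hl)) as H.
    destruct (S n - S m) as [|p]; [simpl in H; auto|].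
    right; left. exists p. auto.
Qed.

Lemma steps_comparable_eq n a y y' :
  steps D n a y -> steps D n a y' ->
  y = y' \/ reach D y y' \/ reach D y' y -> y = y'.
Proof.
  intros H H' [E|[[p Hp]|[p Hp]]]; auto; exfalso.
  - pose proof (steps_length_unique _ _ _ _ (steps_add _ _ _ _ _ H Hp) H'). lia.
  - pose proof (steps_length_unique _ _ _ _ (steps_add _ _ _ _ _ H' Hp) H). lia.
Qed.

End Forest.

Definition swap {A : Type} (u v x : A) : A :=
  if excluded_middle_informative (x = u) then v
  else if excluded_middle_informative (x = v) then u else x.

Lemma swap_inj {A : Type} (u v x y : A) : swap u v x = swap u v y -> x = y.
Proof.
  unfold swap.
  destruct (excluded_middle_informative (x = u)); destruct (excluded_middle_informative (y = u));
  destruct (excluded_middle_informative (x = v)); destruct (excluded_middle_informative (y = v));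
  intros; subst; congruence.
Qed.

Lemma swap_left {A : Type} (u v : A) : swap u v u = v.
Proof. unfold swap. destruct (excluded_middle_informative (u = u)); congruence. Qed.

Lemma segment_injections_realizing (L M : Type) (lt : L -> L -> Prop)
    (z : L) (tau : M -> L) :
  inhabited M -> (forall b, inj_into (seg lt b) M) ->
  (forall m m', tau m = tau m' -> m = m') -> (forall m, lt z (tau m)) ->
  exists E : L -> L -> M,
    (forall b x y, lt x b -> lt y b -> E b x = E b y -> x = y) /\
    (forall m, exists a b, lt a b /\ E b a = m).
Proof.
  intros [m0] Hseg Htau Hz.
  assert (HE0 : forall b, exists e : L -> M,
             forall x y, lt x b -> lt y b -> e x = e y -> x = y).
  { intro b. exact (inj_into_sig_extend L M (fun x => lt x b) m0 (Hseg b)). }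
  destruct (choice _ HE0) as [E0 HE0'].
  assert (Hrho : forall b, exists m, forall m', tau m' = b -> m = m').
  { intro b. destruct (classic (exists m', tau m' = b)) as [[m' <-]|N].
    - exists m'. auto.
    - exists m0. intros m' E. exfalso. eauto. }
  destruct (choice _ Hrho) as [rho Hrho'].
  exists (fun b x => swap (E0 b z) (rho b) (E0 b x)). split.
  - intros b x y Hx Hy E. apply swap_inj in E. eauto.
  - intro m. exists z, (tau m). split; auto.
    rewrite swap_left. exact (Hrho' _ m eq_refl).
Qed.

Section TreeSystem.
Variables (L M : Type) (lt : L -> L -> Prop).
Hypothesis Hwo : strict_well_order lt.
Hypothesis HnL : ~ inj_into L M.
Hypothesis HnatM : inj_into (nat * M) M.
Hypothesis Hnomax : forall x, exists y, lt x y.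
Variables (z k : L).
Hypothesis Hz : forall y, ~ lt y z.
Hypothesis Hk : forall b, lt b k <-> b = z.
Variable E : L -> L -> M.
Hypothesis HE : forall b x y, lt x b -> lt y b -> E b x = E b y -> x = y.
Hypothesis HErealize : forall m, exists a b, lt a b /\ E b a = m.

Definition link (r : M) (a b : L) : Prop := lt a b /\ E b a = r.

Definition tree_rel (r : M) (x y : L * L) : Prop :=
  snd x = z /\ snd y = z /\ reach (link r) (fst x) (fst y).

Lemma link_lt r a b : link r a b -> lt a b.
Proof. intros [H _]. exact H. Qed.

Lemma link_pred_unique r a a' b : link r a b -> link r a' b -> a = a'.
Proof. intros [H1 H2] [H1' H2']. apply (HE b); congruence. Qed.

Lemma link_tree_rel r a b : link r a b -> tree_rel r (a, z) (b, z).
Proof. intro H. repeat split. exists 0. exists a. simpl. auto. Qed.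

Lemma tree_rel_injective r s : tree_rel r = tree_rel s -> r = s.
Proof.
  intro Hrs. destruct (HErealize r) as [a [b [Hab Er]]].
  pose proof (link_tree_rel r a b (conj Hab Er)) as Hr.
  rewrite Hrs in Hr. destruct Hr as [_ [_ [n [w [Haw Hwb]]]]]. simpl in *.
  pose proof (link_tree_rel s w b Hwb) as Hs.
  rewrite <- Hrs in Hs. destruct Hs as [_ [_ [n' [w' [Hww' Hw'b]]]]]. simpl in *.
  assert (w' = a) as -> by (eapply link_pred_unique; eauto; split; eauto).
  assert (w = a) as ->.
  { destruct (steps_le L lt Hwo _ (link_lt s) n a w Haw) as [|Haw']; auto.
    destruct (steps_le L lt Hwo _ (link_lt r) n' w a Hww') as [|Hwa]; auto.
    exfalso. eapply wo_asym; eauto. }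
  destruct Hwb as [_ Es]. congruence.
Qed.

Lemma tree_rel_strong_system : strong_system lt (fun _ => True) k tree_rel.
Proof.
  split; [intro a; exists a; split; [exact I|left; auto]|].
  split; [exists z; apply Hk; auto|].
  split.
  { intros j Hj [F _]. apply Hk in Hj. subst j.
    destruct (F (exist _ z (proj2 (Hk z) eq_refl))) as [c Hc]. eapply Hz; eauto. }
  split.
  { intros r x y [H1 [H2 _]]. split; split; auto; apply Hk; auto. }
  split.
  { intros r x y u [H1 [H2 H3]] [_ [H4 H5]]. repeat split; auto.
    eapply reach_trans; eauto. }
  split.
  { intros r [a1 a2] [b1 b2] c [H1 [H2 H3]] [H1' [_ H3']]. simpl in *. subst.
    destruct (reach_tree L (link r) (link_pred_unique r) _ _ _ H3 H3') as [->|[H|H]].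
    - auto.
    - right; left. repeat split; auto.
    - right; right. repeat split; auto. }
  split.
  { intros r x y [_ [_ H]]. exact (reach_lt L lt Hwo (link r) (link_lt r) _ _ H). }
  split.
  { intros a0 a1 _ _ H. exists z, z, (E a1 a0).
    split; [apply Hk; auto|]. split; [apply Hk; auto|].
    apply link_tree_rel. split; auto. }
  { intros a0 a1 b1 _ _ H Hb1. apply Hk in Hb1. subst b1. exists z, (E a1 a0).
    split; [apply Hk; auto|]. apply link_tree_rel. split; auto. }
Qed.

Lemma no_cofinal_link_chain r (B : L -> Prop) :
  (forall y y', B y -> B y' -> y = y' \/ reach (link r) y y' \/ reach (link r) y' y) ->
  ~ (forall a, exists y, B y /\ le_of lt a y).
Proof.
  intros Hchain Hunb.
  destruct (Hunb z) as [a0 [Ba0 _]].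
  assert (Hsel : forall a, exists p : nat * L,
             B (snd p) /\ lt a (snd p) /\ steps (link r) (fst p) a0 (snd p)).
  { intro a. destruct (cofinal_above L lt Hwo B Hnomax Hunb a a0) as [y [By [Hay Ha0y]]].
    destruct (Hchain a0 y Ba0 By) as [<-|[[n H]|H]].
    - exfalso. eapply wo_irrefl; eauto.
    - exists (S n, y). auto.
    - exfalso. eapply wo_asym; eauto. exact (reach_lt L lt Hwo _ (link_lt r) _ _ H). }
  destruct (choice _ Hsel) as [sel Hsel'].
  apply HnL. apply (inj_into_trans _ (nat * M)); [|exact HnatM].
  exists (fun a => (fst (sel a), E (snd (sel a)) a)).
  intros a a' Heq. injection Heq as Hd He.
  destruct (Hsel' a) as [By [Hay Hsteps]]. destruct (Hsel' a') as [By' [Hay' Hsteps']].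
  rewrite Hd in Hsteps.
  assert (Ey : snd (sel a) = snd (sel a')).
  { apply (steps_comparable_eq L lt Hwo _ (link_lt r) (link_pred_unique r) _ a0 _ _ Hsteps Hsteps'); auto. }
  rewrite <- Ey in He, Hay'. exact (HE _ _ _ Hay Hay' He).
Qed.

Lemma tree_rel_no_cofinal_branch : ~ has_cofinal_branch lt (fun _ => True) k tree_rel.
Proof.
  intros [r [b [Hin [Hcomp Hunb]]]].
  assert (Hlevel : forall x, b x -> snd x = z) by (intros x Hx; apply Hk, Hin, Hx).
  apply (no_cofinal_link_chain r (fun y => b (y, z))).
  - intros y y' Hy Hy'. destruct (Hcomp _ _ Hy Hy') as [E'|[[_ [_ H]]|[_ [_ H]]]]; auto.
    injection E'; auto.
  - intro a. destruct (Hunb a) as [al [be [H1 H2]]].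
    pose proof (Hlevel _ H2) as Hbe. simpl in Hbe. subst be. eauto.
Qed.

End TreeSystem.

Theorem mainTheorem3 (M : Type) (L : Type) (lt : L -> L -> Prop) :
  infinite_type M -> is_successor_of lt M ->
  exists (I : L -> Prop) (k : L) (R : M -> L * L -> L * L -> Prop),
    (* |R| = mu : the family of relations is injectively indexed by M *)
    (forall r s, R r = R s -> r = s) /\
    strong_system lt I k R /\
    ~ has_cofinal_branch lt I k R.
Proof.
  intros Hinf [Hwo [HnL Hseg]].
  pose proof (inj_into_nat_prod_self L M lt Hwo HnL Hinf) as HnatM.
  destruct Hinf as [f _]. set (m0 := f 0).
  pose proof (inj_into_trans _ _ _ (inj_into_option_nat_prod M m0) HnatM) as HoM.
  pose proof (wo_no_max L M lt Hwo HnL Hseg HoM) as Hnomax.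
  assert (HL : exists x : L, True).
  { apply NNPP. intro N. apply HnL. exists (fun _ => m0). intros x. exfalso. eauto. }
  destruct (wo_min L lt Hwo (fun _ => True) HL) as [z [_ Hz]].
  assert (Hbot : forall y, ~ lt y z) by eauto.
  destruct (wo_bottom_succ L lt Hwo z Hbot (Hnomax z)) as [k Hk].
  destruct (inj_into_avoiding M L z
              (inj_into_trans _ _ _ HoM (inj_into_of_not_inj_into L lt Hwo M HnL)))
    as [tau [Htau Htauz]].
  destruct (segment_injections_realizing L M lt z tau (inhabits m0) Hseg Htau
              (fun m => wo_bottom_lt L lt Hwo z (tau m) Hbot (Htauz m)))
    as [E [HE HEreal]].
  exists (fun _ => True), k, (tree_rel L M lt z E).
  split; [|split].
  - exact (tree_rel_injective L M lt Hwo z E HE HEreal).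
  - exact (tree_rel_strong_system L M lt Hwo z k Hbot Hk E HE).
  - exact (tree_rel_no_cofinal_branch L M lt Hwo HnL HnatM Hnomax z k Hk E HE).
Qed.
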